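(* In the setting described in the context, if either ($0<v_0<1$ and $\omega_0>-\frac{\nu}{2}f_0(v_0)$) or ($v_0>1$ and $\omega_0<-\frac{\nu}{2}f_0(v_0)$), then type A blowup occurs.
   Context: Fix $\nu>0$, $v_0>0$ with $v_0\neq1$, and $\omega_0\in\mathbb{R}$. Consider the real ODE system $\frac{d\omega_{-2,i}}{dt}=\omega_{-2,i}^2\frac{1-2v_c^2+5v_c^4}{4v_c^2(1-v_c^2)^2}-\nu\omega_{-2,i}$, $\frac{dv_c}{dt}=-\omega_{-2,i}\frac{1+v_c^2}{4v_c(1-v_c^2)}$ with $v_c(0)=v_0$, $\omega_{-2,i}(0)=\omega_0$; its solution (continued through $v_c=1$) is characterized as follows. Let $F(v)=\frac{v(v^2-1)}{(v^2+1)^2}+\arctan v$, which is a strictly increasing bijection from $(0,\infty)$ onto $(0,\pi/2)$, and let $G(t)=F(v_0)+\frac{2\omega_0 v_0(1-e^{-\nu t})}{\nu(v_0^2-1)(v_0^2+1)^2}$. Then $v_c(t)$ is defined by $F(v_c(t))=G(t)$ for as long as $G(t)\in(0,\pi/2)$, and $\omega_{-2,i}(t)=\omega_0e^{-\nu t}\frac{v_0}{v_c(t)}\frac{v_c(t)^2-1}{v_0^2-1}\left(\frac{v_c(t)^2+1}{v_0^2+1}\right)^2$. Type A blowup means: there is a finite $t_c>0$ with $v_c(t)>0$ on $[0,t_c)$ and $v_c(t)\to0^+$ as $t\to t_c^-$. Type B blowup means: there is a finite $t_c>0$ with $v_c(t)\in(0,\infty)$ on $[0,t_c)$ and $v_c(t)\to+\infty$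 as $t\to t_c^-$. Here $f_0(x)=(x^2-1)^2+\frac{(x^2+1)^2}{x}(x^2-1)\arctan(x)$ and $f_\infty(x)=(x^2-1)^2+\frac{(x^2+1)^2}{x}(x^2-1)\left(\arctan(x)-\frac{\pi}{2}\right)$ for $x>0$. *)

From Stdlib Require Import Reals.
From Coquelicot Require Import Coquelicot.
Open Scope R_scope.

Definition Fc (v : R) : R := v * (v ^ 2 - 1) / (v ^ 2 + 1) ^ 2 + atan v.

Definition Gc (nu v0 w0 t : R) : R :=
  Fc v0 + 2 * w0 * v0 * (1 - exp (- nu * t)) / (nu * (v0 ^ 2 - 1) * (v0 ^ 2 + 1) ^ 2).

Definition f0 (x : R) : R :=
  (x ^ 2 - 1) ^ 2 + (x ^ 2 + 1) ^ 2 / x * (x ^ 2 - 1) * atan x.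

Definition finf (x : R) : R :=
  (x ^ 2 - 1) ^ 2 + (x ^ 2 + 1) ^ 2 / x * (x ^ 2 - 1) * (atan x - PI / 2).

(* Type A blowup: there is a finite t_c > 0 such that v_c(t) (the positive
   solution of F(v_c(t)) = G(t), unique since F is strictly increasing on
   (0,oo)) is defined and positive on [0,t_c) and v_c(t) -> 0+ as t -> t_c-. *)
Definition typeA_blowup (nu v0 w0 : R) : Prop :=
  exists tc : R, 0 < tc /\
    exists vc : R -> R,
      (forall t, 0 <= t < tc -> 0 < vc t /\ Fc (vc t) = Gc nu v0 w0 t) /\
      filterlim vc (at_left tc) (locally 0).

(* G(t) relaxes exponentially from F(v0) > 0 towards the limit
   F(v0) + 2 w0 v0 / (nu (v0^2-1) (v0^2+1)^2) = v0 (nu f0(v0) + 2 w0) / (nu (v0^2-1) (v0^2+1)^2),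
   and the sign conditions on w0 make this limit negative.  Hence G reaches 0 at a finite
   time tc while staying in (0, F(v0)] before, and since F is a continuous increasing
   bijection with F(0) = 0, the solution v_c = F^-1(G) tends to 0 as t -> tc-. *)
From Stdlib Require Import Reals Lra Psatz ClassicalEpsilon.
From Coquelicot Require Import Coquelicot.
Open Scope R_scope.

Lemma is_derive_Fc x : is_derive Fc x (8 * x ^ 2 / (x ^ 2 + 1) ^ 3).
Proof.
  unfold Fc. assert (x ^ 2 + 1 <> 0) by nra.
  auto_derive.
  - repeat split; auto.
  - field; auto.
Qed.

Lemma continuity_Fc : continuity Fc.
Proof.
  intro x. apply derivable_continuous_pt.
  exists (8 * x ^ 2 / (x ^ 2 + 1) ^ 3). apply is_derive_Reals, is_derive_Fc.
Qed.

Lemma Fc_0 : Fc 0 = 0.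
Proof. unfold Fc. rewrite atan_0. field. Qed.

Lemma Fc_lt a b : 0 <= a -> a < b -> Fc a < Fc b.
Proof.
  intros Ha Hab.
  destruct (MVT_cor2 Fc (fun x => 8 * x ^ 2 / (x ^ 2 + 1) ^ 3) a b Hab)
    as [c [Hdiff Hc]].
  { intros c _. apply is_derive_Reals, is_derive_Fc. }
  assert (0 < 8 * c ^ 2 / (c ^ 2 + 1) ^ 3).
  { apply Rdiv_lt_0_compat; [nra | apply pow_lt; nra]. }
  nra.
Qed.

Lemma Fc_lt_inv a b : 0 <= a -> 0 <= b -> Fc a < Fc b -> a < b.
Proof.
  intros Ha Hb HF.
  destruct (Rlt_le_dec a b) as [|[Hba | ->]]; [easy | | lra].
  pose proof (Fc_lt b a Hb Hba). lra.
Qed.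

Lemma Fc_pos x : 0 < x -> 0 < Fc x.
Proof. intro Hx. rewrite <- Fc_0. apply Fc_lt; lra. Qed.

Lemma Fc_ivt b y : 0 < b -> 0 < y <= Fc b -> exists v, 0 < v /\ Fc v = y.
Proof.
  intros Hb Hy.
  destruct (Req_dec (Fc b) y) as [<- | Hne]; [now exists b |].
  destruct (IVT (fun x => Fc x - y) 0 b) as [v [Hv Hzero]].
  - intro x. apply continuity_pt_minus; [apply continuity_Fc | apply continuity_pt_const].
    now intros ? ?.
  - exact Hb.
  - rewrite Fc_0; lra.
  - lra.
  - exists v. destruct (Req_dec v 0) as [-> | Hv0].
    + rewrite Fc_0 in Hzero; lra.
    + split; lra.
Qed.

Lemma Fc_inverse_on b : 0 < b ->
  exists h : R -> R, forall y, 0 < y <= Fc b -> 0 < h y /\ Fc (h y) = y.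
Proof.
  intro Hb.
  exists (fun y => epsilon (inhabits 0) (fun v => 0 < v /\ Fc v = y)).
  intros y Hy. apply epsilon_spec. exact (Fc_ivt b y Hb Hy).
Qed.

Lemma filterlim_Fc_inverse_0 {T} (F : (T -> Prop) -> Prop) {FF : Filter F}
    (v g : T -> R) :
  filterlim g F (locally 0) -> F (fun t => 0 < v t /\ Fc (v t) = g t) ->
  filterlim v F (locally 0).
Proof.
  intros Hg Hv. apply filterlim_locally. intro eps.
  pose proof (cond_pos eps) as Heps.
  apply filterlim_locally with (eps := mkposreal _ (Fc_pos eps Heps)) in Hg.
  generalize (filter_and _ _ Hg Hv). apply filter_imp.
  intros t [Hgt [Hvt HFv]].
  change (Rabs (g t - 0) < Fc eps) in Hgt.
  change (Rabs (v t - 0) < eps).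
  assert (v t < eps) by (apply Fc_lt_inv; try lra; apply Rabs_def2 in Hgt; lra).
  rewrite Rminus_0_r, Rabs_pos_eq; lra.
Qed.

Lemma exp_relaxation_zero nu a c : 0 < nu -> 0 < a -> a + c < 0 ->
  exists tc, 0 < tc /\ a + c * (1 - exp (- nu * tc)) = 0 /\
    forall t, 0 <= t < tc -> 0 < a + c * (1 - exp (- nu * t)) <= a.
Proof.
  intros Hnu Ha Hac.
  (* [r] is the value of [exp (- nu * t)] at which the relaxation vanishes. *)
  set (r := 1 + a / c).
  assert (Hr : 0 < r < 1).
  { unfold r. assert (a / c * - c = - a) by (field; lra).
    assert (a / c < 0) by (apply Rdiv_pos_neg; lra).
    assert (a / c > -1) by (apply (Rmult_lt_reg_r (- c)); lra).
    lra. }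
  exists (- ln r / nu). split; [| split].
  - apply Rdiv_lt_0_compat; [| lra].
    assert (ln r < ln 1) by (apply ln_increasing; lra).
    rewrite ln_1 in *. lra.
  - replace (- nu * (- ln r / nu)) with (ln r) by (field; lra).
    rewrite exp_ln by lra. unfold r. field. lra.
  - intros t [Ht0 Htc].
    assert (r < exp (- nu * t)).
    { rewrite <- (exp_ln r) by lra. apply exp_increasing.
      apply (Rmult_lt_compat_l nu) in Htc; [| lra].
      replace (nu * (- ln r / nu)) with (- ln r) in Htc by (field; lra). lra. }
    assert (exp (- nu * t) <= 1).
    { rewrite <- exp_0. destruct Ht0 as [Ht0 | <-].
      - left. apply exp_increasing. nra.
      - rewrite Rmult_0_r. lra. }
    assert (Hcr : c * (1 - r) = - a) by (unfold r; field; lra).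
    split; nra.
Qed.

Lemma at_left_interval a b : a < b -> at_left b (fun t => a <= t < b).
Proof.
  intro Hab. exists (mkposreal _ (proj2 (Rlt_0_minus a b) Hab)).
  intros t Ht Htb. apply Rabs_def2 in Ht. unfold minus, plus, opp in Ht. simpl in Ht. lra.
Qed.

Definition Gc_drift (nu v0 w0 : R) : R :=
  2 * w0 * v0 / (nu * (v0 ^ 2 - 1) * (v0 ^ 2 + 1) ^ 2).

Lemma Gc_relaxation nu v0 w0 t :
  Gc nu v0 w0 t = Fc v0 + Gc_drift nu v0 w0 * (1 - exp (- nu * t)).
Proof. unfold Gc, Gc_drift, Rdiv. ring. Qed.

Lemma Fc_add_Gc_drift nu v0 w0 : 0 < nu -> 0 < v0 -> v0 <> 1 ->
  Fc v0 + Gc_drift nu v0 w0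
  = v0 * (nu * f0 v0 + 2 * w0) / (nu * (v0 ^ 2 - 1) * (v0 ^ 2 + 1) ^ 2).
Proof.
  intros Hnu Hv0 Hv1.
  assert (v0 ^ 2 - 1 <> 0) by (intro E; apply Hv1; nra).
  unfold Fc, Gc_drift, f0. field. repeat split; nra.
Qed.

Lemma Gc_limit_neg nu v0 w0 : 0 < nu -> 0 < v0 -> v0 <> 1 ->
  ((0 < v0 < 1 /\ w0 > - (nu / 2) * f0 v0) \/
   (v0 > 1 /\ w0 < - (nu / 2) * f0 v0)) ->
  Fc v0 + Gc_drift nu v0 w0 < 0.
Proof.
  intros Hnu Hv0 Hv1 Hcase. rewrite Fc_add_Gc_drift by assumption.
  assert (Hsq : 0 < (v0 ^ 2 + 1) ^ 2) by (apply pow_lt; nra).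
  destruct Hcase as [[Hlt Hw] | [Hgt Hw]].
  - assert (0 < nu * f0 v0 + 2 * w0) by lra.
    apply Rdiv_pos_neg; [nra |].
    apply Rmult_neg_pos; [apply Rmult_pos_neg; nra | exact Hsq].
  - assert (nu * f0 v0 + 2 * w0 < 0) by lra.
    apply Rdiv_neg_pos; [nra |].
    apply Rmult_gt_0_compat; [apply Rmult_gt_0_compat; nra | exact Hsq].
Qed.

Lemma continuous_Gc nu v0 w0 t : continuous (Gc nu v0 w0) t.
Proof.
  apply (@ex_derive_continuous R_AbsRing R_NormedModule).
  unfold Gc, Fc. auto_derive. auto.
Qed.

Theorem lemma3p5 (nu v0 w0 : R) :
  0 < nu -> 0 < v0 -> v0 <> 1 ->
  ((0 < v0 < 1 /\ w0 > - (nu / 2) * f0 v0) \/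
   (v0 > 1 /\ w0 < - (nu / 2) * f0 v0)) ->
  typeA_blowup nu v0 w0.
Proof.
  intros Hnu Hv0 Hv1 Hcase.
  destruct (exp_relaxation_zero nu (Fc v0) (Gc_drift nu v0 w0) Hnu (Fc_pos v0 Hv0)
              (Gc_limit_neg nu v0 w0 Hnu Hv0 Hv1 Hcase)) as [tc [Htc [Hzero Hrange]]].
  destruct (Fc_inverse_on v0 Hv0) as [h Hh].
  assert (Hvc : forall t, 0 <= t < tc ->
            0 < h (Gc nu v0 w0 t) /\ Fc (h (Gc nu v0 w0 t)) = Gc nu v0 w0 t).
  { intros t Ht. apply Hh. rewrite Gc_relaxation. now apply Hrange. }
  exists tc. split; [exact Htc |].
  exists (fun t => h (Gc nu v0 w0 t)). split; [exact Hvc |].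
  apply (filterlim_Fc_inverse_0 (at_left tc)) with (g := Gc nu v0 w0).
  - rewrite <- Hzero, <- Gc_relaxation.
    exact (filterlim_filter_le_1 _ (filter_le_within _) (continuous_Gc nu v0 w0 tc)).
  - apply (filter_imp _ _ Hvc), at_left_interval, Htc.
Qed.
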